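(* Let $n\ge 2$ and let $\rho$ be an $n$-qubit entangled symmetric state. For a collection $\mathcal S$ of subsets of $[n]$: (a) $\mathcal S$ determines $\rho$ if and only if the hypergraph $([n],\mathcal S)$ is connected and there exists $S\in\mathcal S$ with $|S|\ge L(\rho)$; (b) $\mathcal S$ detects $\rho$'s GME if and only if the hypergraph $([n],\mathcal S)$ is connected and there exists $S\in\mathcal S$ with $|S|\ge l(\rho)$.
   Context: Let $[n]=\{1,\dots,n\}$, $\mathcal H_{[n]}=\bigotimes_{i=1}^n\mathcal H_i$ with $\mathcal H_i\cong\mathbb C^2$; for $S\subseteq[n]$, $\mathcal H_S=\bigotimes_{j\in S}\mathcal H_j$ and $\rho_S=\mathrm{Tr}_{[n]\setminus S}\rho$. A pure state is biseparable if it equals $|\alpha\rangle_S\otimes|\beta\rangle_{\bar S}$ for some $\emptyset\ne S\subsetneq[n]$, and fully separable if it is separable with respect to every bipartition; mixed states are biseparable (fully separable) if they are convex combinations of biseparable (fully separable) pure states; entangled means not fully separable; genuinely entangled means not biseparable. $\mathcal C(\rho,\mathcal S)=\{\sigma:\sigma_S=\rho_S\ \forall S\in\mathcal S\}$ (over all density matrices $\sigma$ on $\mathcal H_{[n]}$). $\mathcal S$ determines $\rho$ if $\mathcal C(\rho,\mathcal S)=\{\rho\}$ and detects $\rho$'s GME if every element of $\mathcal C(\rho,\mathcal S)$ is genuinely entangled. $L(\rho)=\min_{\mathcal S\text{ determines }\rho}\max_{S\in\mathcal S}|S|$ and, for genuinely entangled $\rho$, $l(\rho)=\min_{\mathcal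 S\text{ detects }\rho\text{'s GME}}\max_{S\in\mathcal S}|S|$. A state is symmetric if its range lies in the subspace of vectors invariant under swapping any two qubits (an entangled symmetric state is genuinely entangled). The hypergraph $([n],\mathcal S)$ is connected if for every partition of $[n]$ into nonempty sets $X,Y$ some $S\in\mathcal S$ intersects both $X$ and $Y$. *)

From HB Require Import structures.
From mathcomp Require Import all_boot all_order all_algebra.
From mathcomp Require Import complex.
From mathcomp Require Import boolp reals.
Set Implicit Arguments. Unset Strict Implicit. Unset Printing Implicit Defensive.
Import Order.TTheory GRing.Theory Num.Theory.
Local Open Scope ring_scope.
Local Open Scope complex_scope.

Section QubitDefs.
Variable R : realType.
Local Notation C := R[i].

(* computational basis of H_[n] = (C^2)^{\otimes n}: bit strings [n] -> {0,1} *)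
Definition bits (n : nat) := {ffun 'I_n -> bool}.

(* vectors of H_[n] and operators on H_[n] (matrix entries <x|A|y>) *)
Definition Vec (n : nat) := bits n -> C.
Definition Op (n : nat) := bits n -> bits n -> C.

Definition apply_op n (A : Op n) (v : Vec n) : Vec n :=
  fun x => \sum_(y : bits n) A x y * v y.

Definition hermitian n (A : Op n) : Prop := forall x y, A y x = (A x y)^*.

Definition psd n (A : Op n) : Prop :=
  forall v : Vec n, 0 <= \sum_(x : bits n) \sum_(y : bits n) (v x)^* * A x y * v y.

Definition trace n (A : Op n) : C := \sum_(x : bits n) A x x.

Definition density n (rho : Op n) : Prop :=
  hermitian rho /\ psd rho /\ trace rho = 1.

Definition merge n (S : {set 'I_n}) (x c : bits n) : bits n :=
  [ffun i => if i \in S then x i else c i].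

(* the reduced state rho_S = Tr_{[n]\S} rho, written as an operator whose
   entries <x|rho_S|y> only depend on the restrictions of x, y to S:
   <x_S|rho_S|y_S> = sum over bit strings c of [n]\S of <x_S c|rho|y_S c>. *)
Definition reduced n (S : {set 'I_n}) (rho : Op n) : Op n :=
  fun x y => \sum_(c : bits n | [forall i, (i \in S) ==> ~~ c i])
               rho (merge S x c) (merge S y c).

Definition same_marginal n (S : {set 'I_n}) (sigma rho : Op n) : Prop :=
  forall x y : bits n, reduced S sigma x y = reduced S rho x y.

(* f : Vec n is (the image of) a vector of H_S, i.e. depends only on the
   S-coordinates of the basis index *)
Definition depends_only_on n (S : {set 'I_n}) (f : Vec n) : Prop :=
  forall x y : bits n, (forall i, i \in S -> x i = y i) -> f x = f y.

Definition normalized n (psi : Vec n) : Prop :=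
  \sum_(x : bits n) (psi x)^* * psi x = 1.

Definition proj n (psi : Vec n) : Op n := fun x y => psi x * (psi y)^*.

Definition product_wrt n (S : {set 'I_n}) (psi : Vec n) : Prop :=
  exists alpha beta : Vec n,
    [/\ depends_only_on S alpha, depends_only_on (~: S) beta &
        forall x, psi x = alpha x * beta x].

Definition proper_nonempty n (S : {set 'I_n}) : bool := (S != set0) && (S != setT).

Definition biseparable_pure n (psi : Vec n) : Prop :=
  normalized psi /\ exists S : {set 'I_n}, proper_nonempty S /\ product_wrt S psi.

Definition fully_separable_pure n (psi : Vec n) : Prop :=
  normalized psi /\ forall S : {set 'I_n}, proper_nonempty S -> product_wrt S psi.

Definition convex_comb_of n (P : Vec n -> Prop) (rho : Op n) : Prop :=
  exists (m : nat) (p : 'I_m -> C) (psi : 'I_m -> Vec n),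
    [/\ forall k, 0 <= p k, \sum_(k < m) p k = 1, forall k, P (psi k) &
        forall x y, rho x y = \sum_(k < m) p k * proj (psi k) x y].

Definition biseparable n (rho : Op n) : Prop := convex_comb_of (@biseparable_pure n) rho.
Definition fully_separable n (rho : Op n) : Prop :=
  convex_comb_of (@fully_separable_pure n) rho.
Definition entangled n (rho : Op n) : Prop := ~ fully_separable rho.
Definition genuinely_entangled n (rho : Op n) : Prop := ~ biseparable rho.

Definition swap_bits n (i j : 'I_n) (x : bits n) : bits n :=
  [ffun k => x (if k == i then j else if k == j then i else k)].

(* the range of rho lies in the symmetric subspace *)
Definition symmetric_state n (rho : Op n) : Prop :=
  forall (v : Vec n) (i j : 'I_n) (x : bits n),
    apply_op rho v (swap_bits i j x) = apply_op rho v x.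

Definition compatible n (rho : Op n) (Ss : {set {set 'I_n}}) (sigma : Op n) : Prop :=
  density sigma /\ forall S, S \in Ss -> same_marginal S sigma rho.

Definition determines n (Ss : {set {set 'I_n}}) (rho : Op n) : Prop :=
  forall sigma, compatible rho Ss sigma -> sigma = rho.

Definition detects_GME n (Ss : {set {set 'I_n}}) (rho : Op n) : Prop :=
  forall sigma, compatible rho Ss sigma -> genuinely_entangled sigma.

Definition max_size n (Ss : {set {set 'I_n}}) : nat := (\max_(S in Ss) #|S|)%N.

(* L(rho): minimum over all determining collections of the max size.
   The collection {[n]} always determines rho, so the minimum is <= n and
   the default value n of the fold is harmless. *)
Definition Lmin n (rho : Op n) : nat :=
  \big[minn/n]_(Ss : {set {set 'I_n}} | `[< determines Ss rho >]) max_size Ss.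

(* l(rho): same with detection of GME (meaningful for genuinely entangled rho,
   for which {[n]} detects GME, so again the default n is harmless). *)
Definition lmin n (rho : Op n) : nat :=
  \big[minn/n]_(Ss : {set {set 'I_n}} | `[< detects_GME Ss rho >]) max_size Ss.

End QubitDefs.

Definition hconnected n (Ss : {set {set 'I_n}}) : Prop :=
  forall X Y : {set 'I_n}, X != set0 -> Y != set0 -> X :&: Y = set0 -> X :|: Y = setT ->
    exists2 S, S \in Ss & (S :&: X != set0) && (S :&: Y != set0).

From HB Require Import structures.
From mathcomp Require Import all_boot all_order all_algebra perm.
From mathcomp Require Import complex.
From mathcomp Require Import boolp reals.
From mathcomp Require Import ring.
Set Implicit Arguments. Unset Strict Implicit. Unset Printing Implicit Defensive.
Import Order.TTheory GRing.Theory Num.Theory.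
Local Open Scope ring_scope.

(* Writing a positive operator as sum_k p_k |u_k><u_k|, the quantity
   sum_x (sigma(x,x) - sigma(swap x, x)) equals half of
   sum_k p_k ||u_k - u_k o swap||^2, and it can be read off any marginal
   containing the two swapped qubits. So a state sharing with the symmetric
   state rho its marginal on S is invariant under every swap of two qubits of
   S; when the hypergraph ([n], Ss) is connected these swaps generate all
   transpositions and every state compatible with rho is symmetric. For
   symmetric states the marginal on S determines the marginal on any set of
   size at most |S|, so compatibility with Ss only depends on the size of its
   largest set: this gives the "if" directions, the minima L and l being
   attained. Conversely, if ([n], Ss) splits along a cut (X, ~X), the product
   of the marginals rho_X (x) rho_~X is a biseparable state compatible with
   rho, while rho is genuinely entangled: a biseparable pure state in the
   range of a symmetric state is itself symmetric, hence a product across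
   every cut. *)

Section BitStrings.
Variable n : nat.
Implicit Types (S D T : {set 'I_n}) (x y c e : bits n).

Lemma swap_bitsE (i j : 'I_n) x k : swap_bits i j x k = x (tperm i j k).
Proof.
rewrite ffunE; case: tpermP => [->|->|/eqP/negPf-> /eqP/negPf->] //.
  by rewrite eqxx.
by case: (eqVneq j i) => [->|]; rewrite ?eqxx.
Qed.

Lemma swap_bitsK (i j : 'I_n) : involutive (swap_bits i j).
Proof. by move=> x; apply/ffunP => k; rewrite !swap_bitsE tpermK. Qed.

Lemma swap_bitsxx (i : 'I_n) x : swap_bits i i x = x.
Proof. by apply/ffunP => k; rewrite swap_bitsE tperm1 perm1. Qed.

Lemma swap_bitsC (i j : 'I_n) x : swap_bits i j x = swap_bits j i x.
Proof. by apply/ffunP => k; rewrite !swap_bitsE tpermC. Qed.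

Lemma tperm_conj (i j k l : 'I_n) : j != k -> i != k ->
  tperm i k l = tperm j i (tperm j k (tperm j i l)).
Proof. by move=> jk ik; rewrite -permJ tpermJ_tperm // tpermK. Qed.

Lemma mem_tperm_imset D (i j k : 'I_n) :
  (k \in tperm i j @: D) = (tperm i j k \in D).
Proof. by rewrite -{1}(tpermK i j k) mem_imset //; exact: perm_inj. Qed.

Lemma tperm_in S (i j k : 'I_n) : i \in S -> j \in S ->
  (tperm i j k \in S) = (k \in S).
Proof. by move=> iS jS; case: tpermP => [->|->|]; rewrite ?iS ?jS. Qed.

Definition zero_on D c := [forall k, (k \in D) ==> ~~ c k].

Lemma zero_onP D c : reflect (forall k, k \in D -> c k = false) (zero_on D c).
Proof.
apply: (iffP forallP) => [H k kD|H k]; first by move: (H k); rewrite kD => /negPf.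
by apply/implyP => /H ->.
Qed.

Lemma zero_on0 c : zero_on set0 c.
Proof. by apply/zero_onP => k; rewrite inE. Qed.

Lemma zero_on_swap D (i j : 'I_n) c :
  zero_on (tperm i j @: D) (swap_bits i j c) = zero_on D c.
Proof.
apply/zero_onP/zero_onP => H k.
  by move=> kD; move: (H (tperm i j k)); rewrite mem_tperm_imset swap_bitsE !tpermK; exact.
by rewrite mem_tperm_imset swap_bitsE => /H.
Qed.

Definition bits0 : bits n := [ffun => false].

Lemma mergeE S x c k : merge S x c k = if k \in S then x k else c k.
Proof. by rewrite ffunE. Qed.

Lemma merge_merge D T x e c : D \subset T ->
  merge D x (merge T e c) = merge T (merge D x e) c.
Proof.
move=> DT; apply/ffunP => k; rewrite !mergeE.
by case kD: (k \in D); rewrite ?(subsetP DT _ kD) //; case: (k \in T).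
Qed.

Lemma swap_bits_merge S (i j : 'I_n) x c : i \in S -> j \in S ->
  swap_bits i j (merge S x c) = merge S (swap_bits i j x) c.
Proof.
move=> iS jS; apply/ffunP => k; rewrite swap_bitsE !mergeE swap_bitsE tperm_in //.
case kS: (k \in S) => //.
by rewrite tpermD //; apply: contraFneq kS => <-.
Qed.

Lemma merge_tperm_imset D (i j : 'I_n) x c :
  merge (tperm i j @: D) (swap_bits i j x) (swap_bits i j c) =
  swap_bits i j (merge D x c).
Proof. by apply/ffunP => k; rewrite !mergeE !swap_bitsE mergeE mem_tperm_imset. Qed.

Lemma big_zero_on_merge (V : nmodType) D T (F : bits n -> V) : D \subset T ->
  \sum_(c | zero_on D c) F c =
  \sum_(e | zero_on D e && zero_on (~: T) e) \sum_(c | zero_on T c) F (merge T e c).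
Proof.
move=> DT.
rewrite (partition_big (fun c => merge T c bits0)
           (fun e => zero_on D e && zero_on (~: T) e)); last first.
  move=> c /zero_onP cD; apply/andP; split; apply/zero_onP => k kA; rewrite mergeE.
    by rewrite (subsetP DT _ kA) cD.
  by move: kA; rewrite inE => /negPf ->; rewrite ffunE.
apply: eq_bigr => e /andP [/zero_onP eD /zero_onP eT].
rewrite (reindex_onto (merge T e) (merge T bits0)); last first.
  by move=> c /andP [_ /eqP <-]; apply/ffunP => k; rewrite !mergeE; case: (k \in T).
apply: eq_bigl => c; apply/idP/idP.
  move=> /andP [_ /eqP /ffunP E]; apply/zero_onP => k kT.
  by move: (E k); rewrite !mergeE kT ffunE => <-.
move=> /zero_onP cT; apply/andP; split; first (apply/andP; split).
- by apply/zero_onP => k kD; rewrite mergeE (subsetP DT _ kD) eD.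
- apply/eqP/ffunP => k; rewrite !mergeE; case kT: (k \in T) => //.
  by rewrite ffunE eT // inE kT.
- by apply/eqP/ffunP => k; rewrite !mergeE; case kT: (k \in T); rewrite // /bits0 ffunE cT.
Qed.

Lemma sum_bits_merge (V : nmodType) T (F : bits n -> V) :
  \sum_c F c = \sum_(e | zero_on (~: T) e) \sum_(c | zero_on T c) F (merge T e c).
Proof.
rewrite -(eq_bigl _ _ zero_on0) (big_zero_on_merge _ (sub0set T)).
by apply: eq_bigl => e; rewrite zero_on0.
Qed.

End BitStrings.

Lemma setC_neq0 (T : finType) (A : {set T}) : (~: A != set0) = (A != setT).
Proof. by rewrite -setCT (inj_eq (can_inj (@setCK T))). Qed.

Lemma leq_card_setD (T : finType) (A B : {set T}) :
  (#|A| <= #|B|)%N -> (#|A :\: B| <= #|B :\: A|)%N.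
Proof. by rewrite -(cardsID B A) -(cardsID A B) setIC leq_add2l. Qed.

Section Spectral.
Variable R : realType.
Local Notation C := R[i].
Variable n : nat.

Lemma sum_enum_val (V : nmodType) (T : finType) (F : T -> V) :
  \sum_(x : T) F x = \sum_(i < #|T|) F (enum_val i).
Proof. by rewrite -big_enum_val; apply: eq_bigl. Qed.

Lemma psd_decomposition (A : Op R n) : hermitian A -> psd A ->
  exists m (p : 'I_m -> C) (u : 'I_m -> Vec R n),
    (forall k, 0 <= p k) /\ forall x y, A x y = \sum_(k < m) p k * (u k x * (u k y)^*).
Proof.
move=> Ah Ap.
pose M : 'M[C]_#|bits n| := \matrix_(i, j) A (enum_val i) (enum_val j).
have MH : (M ^t*)%sesqui = M by apply/matrixP => i j; rewrite !mxE Ah conjCK.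
have Mnormal : M \is normalmx by rewrite qualifE MH eqxx.
have U := spectral_unitarymx M.
move/orthomx_spectralP: Mnormal; rewrite (invmx_unitary U).
set P := spectralmx M; set sp := spectral_diag M => EM.
have UP : P *m (P ^t*)%sesqui = 1%:M by apply/unitarymxP.
exists #|bits n|, (fun k => sp 0 k), (fun k x => (P k (enum_rank x))^*); split.
  move=> k.
  have E : P *m M *m (P ^t*)%sesqui = diag_mx sp.
    by rewrite EM !mulmxA UP mul1mx -!mulmxA UP mulmx1.
  have -> : sp 0 k = (P *m M *m (P ^t*)%sesqui) k k by rewrite E mxE eqxx mulr1n.
  move: (Ap (fun x => (P k (enum_rank x))^*)).
  rewrite sum_enum_val.
  under eq_bigr => i _ do rewrite sum_enum_val.
  rewrite !mxE.
  under [X in _ -> _ <= X]eq_bigr => j _ do rewrite !mxE.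
  rewrite exchange_big /= => /le_trans; apply; rewrite le_eqVlt; apply/orP; left.
  apply/eqP; apply: eq_bigr => j _; rewrite big_distrl /=; apply: eq_bigr => i _.
  by rewrite !enum_valK !mxE conjCK.
move=> x y.
have -> : A x y = M (enum_rank x) (enum_rank y) by rewrite mxE !enum_rankK.
rewrite EM mxE; apply: eq_bigr => k _.
by rewrite mul_mx_diag !mxE conjCK mulrCA mulrA.
Qed.

End Spectral.

Section TraceDefect.
Variable R : realType.
Local Notation C := R[i].
Variable n : nat.
Implicit Types (A B : Op R n) (S D T : {set 'I_n}) (x y c e : bits n).

Definition trace_defect (f : bits n -> bits n) A : C := \sum_x (A x x - A (f x) x).

Lemma sum_norm_sub_involution (u : Vec R n) (f : bits n -> bits n) : involutive f ->
  \sum_x (u x - u (f x)) * (u x - u (f x))^* =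
  (\sum_x (u x * (u x)^* - u (f x) * (u x)^*)) *+ 2.
Proof.
move=> fK.
have E1 : \sum_x u (f x) * (u (f x))^* = \sum_x u x * (u x)^*.
  by rewrite [RHS](reindex_inj (can_inj fK)).
have E2 : \sum_x u x * (u (f x))^* = \sum_x u (f x) * (u x)^*.
  by rewrite [RHS](reindex_inj (can_inj fK)); apply: eq_bigr => x _; rewrite fK.
under eq_bigr => x _ do rewrite rmorphB /= mulrBl !mulrBr.
by rewrite !sumrB E1 E2 mulr2n opprB.
Qed.

Lemma trace_defect_eq0_invariant m (p : 'I_m -> C) (u : 'I_m -> Vec R n)
    (f : bits n -> bits n) A :
  involutive f -> (forall k, 0 <= p k) ->
  (forall x y, A x y = \sum_(k < m) p k * (u k x * (u k y)^*)) ->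
  trace_defect f A = 0 -> forall k, p k != 0 -> forall x, u k (f x) = u k x.
Proof.
move=> fK p_ge0 EA D0 k pk x.
pose dist j := \sum_x (u j x - u j (f x)) * (u j x - u j (f x))^*.
have dist_ge0 j : 0 <= dist j by apply: sumr_ge0 => y _; exact: mul_conjC_ge0.
have : \sum_(j < m) p j * dist j = 0.
  under eq_bigr => j _ do rewrite /dist sum_norm_sub_involution // mulrnAr.
  rewrite sumrMnl; apply/eqP; rewrite mulrn_eq0 /=; apply/eqP.
  apply: etrans D0; under [RHS]eq_bigr => y _ do rewrite !EA -sumrB.
  rewrite [RHS]exchange_big; apply: eq_bigr => j _; rewrite mulr_sumr.
  by apply: eq_bigr => y _; rewrite -mulrBr.
move/psumr_eq0P => /(_ (fun j _ => mulr_ge0 (p_ge0 j) (dist_ge0 j)) k isT).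
move/eqP; rewrite mulf_eq0 (negPf pk) /= => /eqP /psumr_eq0P.
move=> /(_ (fun y _ => mul_conjC_ge0 _) x isT) /eqP.
by rewrite mul_conjC_eq0 subr_eq0 => /eqP ->.
Qed.

Lemma trace_defect_reduced S (i j : 'I_n) A : i \in S -> j \in S ->
  trace_defect (swap_bits i j) A =
  \sum_(e | zero_on (~: S) e) (reduced S A e e - reduced S A (swap_bits i j e) e).
Proof.
move=> iS jS; rewrite /trace_defect (sum_bits_merge S); apply: eq_bigr => e _.
by rewrite /reduced -sumrB; apply: eq_bigr => c _; rewrite swap_bits_merge.
Qed.

Lemma trace_defect_same_marginal S (i j : 'I_n) A B : i \in S -> j \in S ->
  same_marginal S A B -> trace_defect (swap_bits i j) A = trace_defect (swap_bits i j) B.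
Proof.
move=> iS jS AB; rewrite !(trace_defect_reduced _ iS jS).
by apply: eq_bigr => e _; rewrite !AB.
Qed.

End TraceDefect.

Section SwapInvariance.
Variable R : realType.
Variable n : nat.
Implicit Types (A B : Op R n) (S D T : {set 'I_n}) (x y c e : bits n).

(* Invariance of the rows of A, i.e. of its range, as in symmetric_state. *)
Definition swap_invariant A (i j : 'I_n) := forall x y, A (swap_bits i j x) y = A x y.

Definition swap_symmetric A :=
  forall (i j : 'I_n) x y, A (swap_bits i j x) (swap_bits i j y) = A x y.

Lemma swap_invariantC A (i j : 'I_n) : swap_invariant A i j -> swap_invariant A j i.
Proof. by move=> H x y; rewrite swap_bitsC. Qed.

Lemma swap_invariant_trans A (i j k : 'I_n) :
  swap_invariant A j i -> swap_invariant A j k -> swap_invariant A i k.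
Proof.
move=> Hji Hjk.
have [<-|ik] := eqVneq i k; first by move=> x y; rewrite swap_bitsxx.
have [<-|jk] := eqVneq j k; first exact: swap_invariantC.
move=> x y.
have -> : swap_bits i k x = swap_bits j i (swap_bits j k (swap_bits j i x)).
  by apply/ffunP => l; rewrite !swap_bitsE (tperm_conj _ jk ik).
by rewrite Hji Hjk Hji.
Qed.

Lemma hconnected_swap_invariant (Ss : {set {set 'I_n}}) A : hconnected Ss ->
  (forall S, S \in Ss -> forall i j, i \in S -> j \in S -> swap_invariant A i j) ->
  forall i j, swap_invariant A i j.
Proof.
move=> Hc HS i.
pose X := [set k | `[< swap_invariant A i k >] ].
have XP k : reflect (swap_invariant A i k) (k \in X) by rewrite inE; exact: asboolP.
suff XT : X = setT by move=> j; apply/XP; rewrite XT inE.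
apply/eqP; apply: contraT => XnT.
have X0 : X != set0 by apply/set0Pn; exists i; apply/XP => x y; rewrite swap_bitsxx.
have XC0 : ~: X != set0 by rewrite setC_neq0.
have [S SSs /andP [/set0Pn [j]]] := Hc X (~: X) X0 XC0 (setICr X) (setUCr X).
rewrite in_setI => /andP [jS /XP Hij] /set0Pn [k].
rewrite in_setI in_setC => /andP [kS /negP []]; apply/XP.
exact: swap_invariant_trans (swap_invariantC Hij) (HS S SSs j k jS kS).
Qed.

Lemma trace_defect_invariant A (i j : 'I_n) : swap_invariant A i j ->
  trace_defect (swap_bits i j) A = 0.
Proof. by move=> H; rewrite /trace_defect big1 // => x _; rewrite H subrr. Qed.

Lemma same_marginal_swap_invariant S A B (i j : 'I_n) : hermitian A -> psd A ->
  swap_invariant B i j -> i \in S -> j \in S -> same_marginal S A B ->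
  swap_invariant A i j.
Proof.
move=> Ah Ap HB iS jS AB.
have [m [p [u [p_ge0 EA]]]] := psd_decomposition Ah Ap.
have D0 : trace_defect (swap_bits i j) A = 0.
  by rewrite (trace_defect_same_marginal iS jS AB) trace_defect_invariant.
have Hu := trace_defect_eq0_invariant (swap_bitsK i j) p_ge0 EA D0.
move=> x y; rewrite !EA; apply: eq_bigr => k _.
by have [->|pk] := eqVneq (p k) 0; rewrite ?mul0r ?Hu.
Qed.

Lemma swap_symmetric_of_invariant A : hermitian A ->
  (forall i j, swap_invariant A i j) -> swap_symmetric A.
Proof. by move=> Ah H i j x y; rewrite H Ah H -Ah. Qed.

Lemma symmetric_state_swap_invariant A : symmetric_state A ->
  forall i j, swap_invariant A i j.
Proof.
move=> H i j x y; move: (H (fun y' => (y' == y)%:R) i j x); rewrite /apply_op.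
have E (F : bits n -> R[i]) : \sum_y0 F y0 * (y0 == y)%:R = F y.
  rewrite (bigD1 y) //= eqxx mulr1 big1 ?addr0 // => y' /negPf ->.
  by rewrite mulr0.
by rewrite !E.
Qed.

End SwapInvariance.

Section SymmetricMarginals.
Variable R : realType.
Variable n : nat.
Implicit Types (A B : Op R n) (S D T : {set 'I_n}) (x y c e : bits n).

Lemma same_marginal_sub D T A B : D \subset T -> same_marginal T A B ->
  same_marginal D A B.
Proof.
move=> DT H x y; rewrite /reduced !(big_zero_on_merge _ DT); apply: eq_bigr => e _.
under eq_bigr => c _ do rewrite !merge_merge //.
under [RHS]eq_bigr => c _ do rewrite !merge_merge //.
exact: H.
Qed.

Lemma reduced_tperm_imset D (i j : 'I_n) A x y : swap_symmetric A ->
  reduced (tperm i j @: D) A (swap_bits i j x) (swap_bits i j y) = reduced D A x y.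
Proof.
move=> sA; rewrite /reduced (reindex_inj (can_inj (swap_bitsK i j))) /=.
apply: eq_big => [c|c _]; first exact: zero_on_swap.
by rewrite !merge_tperm_imset sA.
Qed.

Lemma same_marginal_tperm_imset D (i j : 'I_n) A B :
  swap_symmetric A -> swap_symmetric B ->
  same_marginal (tperm i j @: D) A B -> same_marginal D A B.
Proof.
move=> sA sB H x y.
by rewrite -(reduced_tperm_imset _ i j _ _ sA) -(reduced_tperm_imset _ i j _ _ sB).
Qed.

(* Induction on #|D :\: T|: swapping a point of D outside T with a point of T
   outside D brings D closer to T without changing its marginal. *)
Lemma same_marginal_card_le D T A B : swap_symmetric A -> swap_symmetric B ->
  same_marginal T A B -> (#|D| <= #|T|)%N -> same_marginal D A B.
Proof.
move=> sA sB H.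
have [m] := ubnP #|D :\: T|; elim: m D => // m IH D.
rewrite ltnS => Dm DT.
have [DsubT|] := boolP (D \subset T); first exact: same_marginal_sub DsubT H.
rewrite -setD_eq0 -card_gt0 => /[dup] DT0 /card_gt0P [a].
rewrite in_setD => /andP [aT aD].
have /card_gt0P [b] := leq_trans DT0 (leq_card_setD DT).
rewrite in_setD => /andP [bD bT].
have D'T : tperm a b @: D :\: T \proper D :\: T.
  have aD' : a \notin tperm a b @: D :\: T.
    by rewrite in_setD mem_tperm_imset tpermL (negPf bD) andbF.
  rewrite properEneq; apply/andP; split.
    by apply: contraNneq aD' => ->; rewrite in_setD aT aD.
  apply/subsetP => k; rewrite !in_setD mem_tperm_imset.
  by case: tpermP => [->|->|_ _]; rewrite ?(negPf bD) ?bT ?andbF.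
apply: (same_marginal_tperm_imset (i := a) (j := b) sA sB); apply: IH.
  exact: leq_trans (proper_card D'T) Dm.
by rewrite card_imset //; exact: perm_inj.
Qed.

End SymmetricMarginals.

Section ProductStates.
Variable R : realType.
Variable n : nat.
Implicit Types (S T U : {set 'I_n}) (x y z : bits n) (psi : Vec R n).

Lemma product_wrt_merge T psi : product_wrt T psi ->
  forall x y, psi x * psi y = psi (merge T x y) * psi (merge T y x).
Proof.
move=> [a [b [Ha Hb Hp]]] x y; rewrite !Hp.
have a_merge u v : a (merge T u v) = a u by apply: Ha => k kT; rewrite mergeE kT.
have b_merge u v : b (merge T u v) = b v.
  by apply: Hb => k; rewrite inE mergeE => /negPf ->.
rewrite !a_merge !b_merge.
by rewrite mulrACA [RHS]mulrACA [b y * b x]mulrC.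
Qed.

(* The converse: the exchange identity at one point z with psi z != 0
   suffices, with psi = psi(. on T, z off T) * psi(z on T, . off T) / psi z. *)
Lemma product_wrt_of_merge T psi z : psi z != 0 ->
  (forall x, psi x * psi z = psi (merge T x z) * psi (merge T z x)) ->
  product_wrt T psi.
Proof.
move=> pz H.
exists (fun x => psi (merge T x z)), (fun x => psi (merge T z x) / psi z); split.
- move=> x y Hxy; congr (psi _); apply/ffunP => k; rewrite !mergeE.
  by case kT: (k \in T) => //; rewrite Hxy.
- move=> x y Hxy; congr (psi _ / _); apply/ffunP => k; rewrite !mergeE.
  by case kT: (k \in T) => //; rewrite Hxy // inE kT.
- by move=> x; rewrite mulrA -H mulfK.
Qed.

Lemma product_wrtC T psi : product_wrt T psi -> product_wrt (~: T) psi.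
Proof.
move=> [a [b [Ha Hb Hp]]]; exists b, a; split => //; first by rewrite setCK.
by move=> x; rewrite mulrC.
Qed.

Lemma product_wrtI T U psi z : psi z != 0 -> product_wrt T psi -> product_wrt U psi ->
  product_wrt (T :&: U) psi.
Proof.
move=> pz PT PU; apply: (product_wrt_of_merge pz) => x.
set w := merge (T :&: U) z x.
have h1 := product_wrt_merge PU x z.
have h2 := product_wrt_merge PT (merge U x z) z.
have h3 := product_wrt_merge PU w z.
have E1 : merge T (merge U x z) z = merge (T :&: U) x z.
  by apply/ffunP => k; rewrite !mergeE !inE; case: (k \in T); case: (k \in U).
have E2 : merge T z (merge U x z) = merge U w z.
  by apply/ffunP => k; rewrite !mergeE !inE; case: (k \in T); case: (k \in U).
have E3 : merge U z w = merge U z x.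
  by apply/ffunP => k; rewrite !mergeE !inE; case: (k \in T); case: (k \in U).
rewrite E1 E2 in h2; rewrite E3 in h3.
by apply: (mulIf pz); rewrite h1 mulrAC h2 -mulrA -h3 mulrA.
Qed.

Lemma product_wrtU T U psi z : psi z != 0 -> product_wrt T psi -> product_wrt U psi ->
  product_wrt (T :|: U) psi.
Proof.
move=> pz PT PU.
have := product_wrtC (product_wrtI pz (product_wrtC PT) (product_wrtC PU)).
by rewrite setCI !setCK.
Qed.

Lemma product_wrt_tperm_imset T psi (i j : 'I_n) :
  (forall x, psi (swap_bits i j x) = psi x) ->
  product_wrt T psi -> product_wrt (tperm i j @: T) psi.
Proof.
move=> Hs [a [b [Ha Hb Hp]]].
exists (a \o swap_bits i j), (b \o swap_bits i j); split.
- move=> x y Hxy; apply: Ha => k kT; rewrite /= !swap_bitsE; apply: Hxy.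
  by rewrite mem_tperm_imset tpermK.
- move=> x y Hxy; apply: Hb => k; rewrite inE => kT; rewrite /= !swap_bitsE.
  by apply: Hxy; rewrite inE mem_tperm_imset tpermK.
- by move=> x; rewrite -Hp Hs.
Qed.

Lemma product_wrt0 psi : product_wrt set0 psi.
Proof.
exists (fun _ => 1), psi; split => [//|x y Hxy|x]; last by rewrite mul1r.
by congr (psi _); apply/ffunP => k; apply: Hxy; rewrite !inE.
Qed.

Section Symmetric.
Variable psi : Vec R n.
Variable z : bits n.
Hypothesis psi_z : psi z != 0.
Hypothesis psi_sym : forall i j x, psi (swap_bits i j x) = psi x.

(* Intersecting T with its image under the transposition of l in T and m0
   outside T removes l but keeps every other point of T. *)
Lemma product_wrt1 T (k : 'I_n) : product_wrt T psi -> k \in T -> T != setT ->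
  product_wrt [set k] psi.
Proof.
have [m] := ubnP #|T|; elim: m T => // m IH T.
rewrite ltnS => Tm PT kT TnT.
have [/eqP/cards1P [k' Tk']|T1] := eqVneq #|T| 1%N.
  by move: kT PT; rewrite Tk' inE => /eqP ->.
have [l lT lk] : exists2 l, l \in T & l != k.
  have /card_gt0P [l] : (0 < #|T :\ k|)%N.
    by rewrite lt0n; move: T1; rewrite (cardsD1 k T) kT add1n eqSS.
  by rewrite !inE => /andP [lk lT]; exists l.
have /subsetPn [m0 _ m0T] : ~~ (setT \subset T) by rewrite subTset.
have m0k : m0 != k by apply: contraNneq m0T => ->.
apply: (IH (T :&: (tperm l m0 @: T))).
- apply: leq_trans Tm; apply: proper_card; rewrite properEneq subsetIl andbT.
  apply/negP => /eqP TT; move: lT; rewrite -{1}TT inE mem_tperm_imset tpermL.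
  by rewrite (negPf m0T) andbF.
- exact: product_wrtI psi_z PT (product_wrt_tperm_imset (psi_sym l m0) PT).
- by rewrite inE kT mem_tperm_imset tpermD.
- apply: contraNneq m0T => TT; have := in_setT m0.
  by rewrite -TT inE => /andP [].
Qed.

Lemma symmetric_product_wrt_all S : proper_nonempty S -> product_wrt S psi ->
  forall T, product_wrt T psi.
Proof.
move=> /andP [S0 ST] PS.
have single k : product_wrt [set k] psi.
  have [kS|kS] := boolP (k \in S); first exact: product_wrt1 PS kS ST.
  apply: (product_wrt1 (product_wrtC PS)); first by rewrite inE.
  by rewrite -setC_neq0 setCK.
move=> T; have [m] := ubnP #|T|; elim: m T => // m IH T.
have [-> _|/set0Pn [k kT]] := eqVneq T set0; first exact: product_wrt0.
rewrite (cardsD1 k T) kT add1n ltnS => Tm; rewrite -(setD1K kT).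
exact: product_wrtU psi_z (single k) (IH _ Tm).
Qed.

End Symmetric.

End ProductStates.

Lemma sum_eq1_neq0 (K : nzRingType) (I : finType) (F : I -> K) :
  \sum_i F i = 1 -> exists i, F i != 0.
Proof.
move=> F1; have [i Fi|F0] := pickP (fun i => F i != 0); first by exists i.
move: F1; rewrite big1 => [/eqP|i _]; first by rewrite eq_sym oner_eq0.
exact/eqP/negbFE/F0.
Qed.

Section ConvexCombinations.
Variable R : realType.
Local Notation C := R[i].
Variable n : nat.
Implicit Types (A : Op R n) (psi : Vec R n).

Lemma conjcE (x : C) : conjc x = x^*.
Proof. by []. Qed.

Lemma normalized_neq0 psi : normalized psi -> exists z, psi z != 0.
Proof.
by case/sum_eq1_neq0 => z; rewrite mulf_eq0 negb_or => /andP [_ pz]; exists z.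
Qed.

Lemma convex_comb_density (P : Vec R n -> Prop) A :
  (forall psi, P psi -> normalized psi) -> convex_comb_of P A -> density A.
Proof.
move=> PN [m [p [psi [p_ge0 p1 Ppsi EA]]]]; split; [|split].
- move=> x y; rewrite !EA conjcE rmorph_sum; apply: eq_bigr => k _.
  rewrite /proj ?conjcE !rmorphM /= conjCK (geC0_conj (p_ge0 k)).
  by rewrite [(psi k x)^* * _]mulrC.
- move=> v.
  have -> : \sum_x \sum_y (v x)^* * A x y * v y =
     \sum_k p k * ((\sum_x (v x)^* * psi k x) * (\sum_x (v x)^* * psi k x)^*).
    under eq_bigr => x _ do under eq_bigr => y _ do rewrite EA mulr_sumr mulr_suml.
    under eq_bigr => x _ do rewrite exchange_big /=.
    rewrite exchange_big /=; apply: eq_bigr => k _.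
    rewrite rmorph_sum mulr_suml mulr_sumr; apply: eq_bigr => x _.
    rewrite mulr_sumr mulr_sumr; apply: eq_bigr => y _.
    rewrite /proj ?conjcE rmorphM /= conjCK.
    ring.
  by apply: sumr_ge0 => k _; apply: mulr_ge0 => //; exact: mul_conjC_ge0.
- rewrite /trace; under eq_bigr do rewrite EA.
  rewrite exchange_big /= -p1; apply: eq_bigr => k _.
  rewrite -mulr_sumr; under eq_bigr do rewrite /proj mulrC.
  by rewrite (PN _ (Ppsi k)) mulr1.
Qed.

Lemma symmetric_biseparable_pure_fully_separable psi :
  (forall i j x, psi (swap_bits i j x) = psi x) ->
  biseparable_pure psi -> fully_separable_pure psi.
Proof.
move=> psi_sym [Npsi [S [SP PS]]]; split => // T _.
have [z pz] := normalized_neq0 Npsi.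
exact: (symmetric_product_wrt_all pz psi_sym SP PS T).
Qed.

(* The vectors of a decomposition of a swap-invariant state are themselves
   swap-invariant, so its biseparable decompositions are fully separable. *)
Lemma swap_invariant_genuinely_entangled A : entangled A ->
  (forall i j, swap_invariant A i j) -> genuinely_entangled A.
Proof.
move=> Aent Ainv [m [p [psi [p_ge0 p1 Pbis EA]]]]; apply: Aent.
have [k0 pk0] := sum_eq1_neq0 p1.
have psi_full k : p k != 0 -> fully_separable_pure (psi k).
  move=> pk; apply: symmetric_biseparable_pure_fully_separable (Pbis k) => i j.
  exact: trace_defect_eq0_invariant (swap_bitsK i j) p_ge0 EA
           (trace_defect_invariant (Ainv i j)) k pk.
exists m, p, (fun k => if p k == 0 then psi k0 else psi k); split => //.
  by move=> k; case: eqP => [_|/eqP pk]; exact: psi_full.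
by move=> x y; rewrite EA; apply: eq_bigr => k _; case: eqP => [->|]; rewrite ?mul0r.
Qed.

(* A nonnegative combination of rank-one operators with unit trace is a convex
   combination of the normalized vectors: the weight of phi_i becomes
   w_i ||phi_i||^2, and terms of weight zero are replaced by a fixed term of
   nonzero weight. *)
Lemma convex_comb_of_normalize (I : finType) (w : I -> C) (phi : I -> Vec R n)
    (P : Vec R n -> Prop) A :
  (forall i, 0 <= w i) ->
  (forall x y, A x y = \sum_i w i * (phi i x * (phi i y)^*)) ->
  trace A = 1 ->
  (forall i (a : C), normalized (fun x => a * phi i x) -> P (fun x => a * phi i x)) ->
  convex_comb_of P A.
Proof.
move=> w_ge0 EA trA HP.
pose N i := \sum_x phi i x * (phi i x)^*.
have N_ge0 i : 0 <= N i by apply: sumr_ge0 => x _; exact: mul_conjC_ge0.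
pose a i := (sqrtC (N i))^-1.
have aaN i : N i != 0 -> a i * (a i)^* * N i = 1.
  move=> Ni; have sN_ge0 : 0 <= sqrtC (N i) by rewrite sqrtC_ge0.
  by rewrite /a fmorphV /= (geC0_conj sN_ge0) -invfM -expr2 sqrtCK mulVf.
pose p i := w i * N i.
have p_ge0 i : 0 <= p i by exact: mulr_ge0.
have sum_p : \sum_i p i = 1.
  rewrite -trA /trace; under [RHS]eq_bigr do rewrite EA.
  by rewrite [RHS]exchange_big; apply: eq_bigr => i _; rewrite /p /N mulr_sumr.
have [i0 pi0] := sum_eq1_neq0 sum_p.
pose j i := if p i == 0 then i0 else i.
have pj i : p (j i) != 0 by rewrite /j; case: (eqVneq (p i) 0).
have Nj i : N (j i) != 0 by move: (pj i); rewrite mulf_eq0 negb_or => /andP [].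
pose psi i x := a (j i) * phi (j i) x.
have Npsi i : normalized (psi i).
  rewrite /normalized /psi -(aaN _ (Nj i)) /N mulr_sumr; apply: eq_bigr => x _.
  rewrite ?conjcE rmorphM /=; ring.
exists #|I|, (p \o enum_val), (psi \o enum_val); split => //=.
- by rewrite -(sum_enum_val p).
- by move=> k; exact: HP (Npsi _).
move=> x y; rewrite -(sum_enum_val (fun i => p i * proj (psi i) x y)) EA.
apply: eq_bigr => i _; rewrite /proj /psi.
have [pi_eq0|pi] := eqVneq (p i) 0.
  rewrite pi_eq0 mul0r; move/eqP: pi_eq0; rewrite /p mulf_eq0 => /orP [/eqP ->|/eqP N0].
    by rewrite mul0r.
  have phi0 z : phi i z = 0.
    apply/eqP; rewrite -mul_conjC_eq0; apply/eqP.
    by apply: (psumr_eq0P _ N0) => // t _; exact: mul_conjC_ge0.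
  by rewrite phi0 mul0r mulr0.
have ji : j i = i by rewrite /j (negPf pi).
have Ni : N i != 0 by move: (Nj i); rewrite ji.
have := aaN i Ni; rewrite ?conjcE rmorphM /= => E.
rewrite ji.
transitivity (w i * (phi i x * (phi i y)^*) * (a i * (a i)^* * N i)).
  by rewrite E mulr1.
rewrite /p.
ring.
Qed.

End ConvexCombinations.

Section MarginalProduct.
Variable R : realType.
Local Notation C := R[i].
Variable n : nat.
Implicit Types (A : Op R n) (X : {set 'I_n}) (x y c e : bits n).

(* rho_X (x) rho_~X, written on the full space like [reduced]. *)
Definition marginal_product X A : Op R n :=
  fun x y => reduced X A x y * reduced (~: X) A x y.

Lemma trace_reduced X A : trace A = \sum_(e | zero_on (~: X) e) reduced X A e e.
Proof. by rewrite /trace (sum_bits_merge X). Qed.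

Lemma reduced_depends_only_on X A x x' y y' :
  (forall k, k \in X -> x k = x' k) -> (forall k, k \in X -> y k = y' k) ->
  reduced X A x y = reduced X A x' y'.
Proof.
move=> Hx Hy; apply: eq_bigr => c _.
by congr (A _ _); apply/ffunP => k; rewrite !mergeE; case kX: (k \in X); rewrite ?Hx ?Hy.
Qed.

Lemma marginal_product_same_marginal X A : trace A = 1 ->
  same_marginal X (marginal_product X A) A.
Proof.
move=> trA x y; rewrite {1}/reduced.
have E c : zero_on X c -> marginal_product X A (merge X x c) (merge X y c) =
    reduced X A x y * reduced (~: X) A c c.
  move=> _; congr (_ * _); apply: reduced_depends_only_on => k.
  - by move=> kX; rewrite mergeE kX.
  - by move=> kX; rewrite mergeE kX.
  - by rewrite inE mergeE => /negPf ->.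
  - by rewrite inE mergeE => /negPf ->.
rewrite (eq_bigr _ E) -mulr_sumr.
by rewrite -[X in \sum_(_ | zero_on X _) _]setCK -trace_reduced trA mulr1.
Qed.

Lemma marginal_productC X A : marginal_product (~: X) A = marginal_product X A.
Proof. by apply: funext => x; apply: funext => y; rewrite /marginal_product setCK mulrC. Qed.

Lemma reduced_as_sum X m (p : 'I_m -> C) (u : 'I_m -> Vec R n) A :
  (forall x y, A x y = \sum_(k < m) p k * (u k x * (u k y)^*)) ->
  forall x y, reduced X A x y = \sum_(kc : 'I_m * bits n)
     (zero_on X kc.2)%:R * p kc.1 *
     (u kc.1 (merge X x kc.2) * (u kc.1 (merge X y kc.2))^*).
Proof.
move=> EA x y; rewrite -(pair_bigA _ (fun k c => (zero_on X c)%:R * p k *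
  (u k (merge X x c) * (u k (merge X y c))^*))) /= exchange_big /= /reduced big_mkcond /=.
apply: eq_bigr => c _; case: ifP => Xc.
  by rewrite EA; apply: eq_bigr => k _; rewrite (_ : zero_on X c = true) // mul1r.
by rewrite big1 // => k _; rewrite (_ : zero_on X c = false) // !mul0r.
Qed.

(* Expanding both marginals through a decomposition of A exhibits the
   product as a combination of products alpha_S (x) beta_~S. *)
Lemma marginal_product_biseparable X A : density A -> proper_nonempty X ->
  convex_comb_of (@biseparable_pure R n) (marginal_product X A).
Proof.
move=> [Ah [Ap trA]] PX.
have [m [p [u [p_ge0 EA]]]] := psd_decomposition Ah Ap.
pose w (i : ('I_m * bits n) * ('I_m * bits n)) :=
  (zero_on X i.1.2)%:R * p i.1.1 * ((zero_on (~: X) i.2.2)%:R * p i.2.1).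
pose phi (i : ('I_m * bits n) * ('I_m * bits n)) x :=
  u i.1.1 (merge X x i.1.2) * u i.2.1 (merge (~: X) x i.2.2).
apply: (@convex_comb_of_normalize _ _ _ w phi).
- by move=> i; apply: mulr_ge0; apply: mulr_ge0 => //; exact: ler0n.
- move=> x y; rewrite /marginal_product !(reduced_as_sum _ EA) mulr_suml.
  under eq_bigr do rewrite mulr_sumr.
  rewrite pair_bigA; apply: eq_bigr => [[[k c] [l d]]] _.
  by rewrite /w /phi /= ?conjcE rmorphM /=; ring.
- rewrite (trace_reduced X) -trA (trace_reduced X).
  by apply: eq_bigr => e _; rewrite marginal_product_same_marginal.
- move=> i a Na; split => //; exists X; split => //.
  exists (fun x => a * u i.1.1 (merge X x i.1.2)), (fun x => u i.2.1 (merge (~: X) x i.2.2)).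
  split=> [x y Hxy|x y Hxy|x]; last by rewrite /phi mulrA.
  + congr (_ * u _ _); apply/ffunP => k; rewrite !mergeE.
    by case kX: (k \in X); rewrite ?Hxy.
  + congr (u _ _); apply/ffunP => k; rewrite !mergeE.
    by case kX: (k \in ~: X); rewrite ?Hxy.
Qed.

Lemma marginal_product_compatible (Ss : {set {set 'I_n}}) X A : density A ->
  proper_nonempty X -> (forall S, S \in Ss -> S \subset X \/ S \subset ~: X) ->
  compatible A Ss (marginal_product X A).
Proof.
move=> dA PX HS; split.
  by apply: (convex_comb_density _ (marginal_product_biseparable dA PX)) => psi [].
have [_ [_ trA]] := dA.
move=> S /HS [SX|SXC]; first exact: same_marginal_sub SX (marginal_product_same_marginal X trA).
by apply: same_marginal_sub SXC _; rewrite -marginal_productC; exact: marginal_product_same_marginal.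
Qed.

End MarginalProduct.

Section MinMaxSize.
Variable n : nat.
Implicit Types (P : {set {set 'I_n}} -> Prop) (Ss : {set {set 'I_n}}).

Definition min_max_size P : nat :=
  \big[minn/n]_(Ss : {set {set 'I_n}} | `[< P Ss >]) max_size Ss.

Lemma min_max_size_le P Ss : P Ss -> (min_max_size P <= max_size Ss)%N.
Proof.
move=> PSs; rewrite /min_max_size.
have : Ss \in index_enum {set {set 'I_n}} by rewrite mem_index_enum.
elim: (index_enum _) => [//|Ts r IH]; rewrite inE big_cons => /orP [/eqP <-|Ssr].
  by rewrite ifT; [exact: geq_minl | exact/asboolP].
by case: ifP => _; [apply: leq_trans (geq_minr _ _) (IH Ssr) | exact: IH].
Qed.

Lemma max_size_setT : max_size [set [set: 'I_n]] = n.
Proof. by rewrite /max_size big_set1 cardsT card_ord. Qed.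

Lemma min_max_size_attained P : P [set setT] ->
  exists2 Ss, P Ss & min_max_size P = max_size Ss.
Proof.
move=> /asboolP PT.
case: (@arg_minnP _ _ (fun Ss => `[< P Ss >]) (@max_size n) PT) => Ss /asboolP PSs Ssmin.
exists Ss => //; apply/eqP; rewrite eqn_leq min_max_size_le //=.
apply: (big_ind (fun v => max_size Ss <= v)%N) => [||Ts /Ssmin //].
- by rewrite -{2}max_size_setT; exact: Ssmin.
- by move=> a b Ha Hb; rewrite leq_min Ha Hb.
Qed.

Lemma card_le_max_size Ss S : S \in Ss -> (#|S| <= max_size Ss)%N.
Proof. by move=> SSs; apply: leq_bigmax_cond. Qed.

Lemma max_size_attained Ss : Ss != set0 -> exists2 S, S \in Ss & max_size Ss = #|S|.
Proof.
rewrite -card_gt0 => /(eq_bigmax_cond (fun S : {set 'I_n} => #|S|)) [S SSs E].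
by exists S.
Qed.

Lemma hconnected_neq0 Ss : (2 <= n)%N -> hconnected Ss -> Ss != set0.
Proof.
move=> n_ge2 Ssconn.
pose a : 'I_n := Ordinal (leq_trans (isT : (0 < 2)%N) n_ge2).
pose b : 'I_n := Ordinal (leq_trans (isT : (1 < 2)%N) n_ge2).
have a0 : [set a] != set0 by apply/set0Pn; exists a; rewrite inE.
have b0 : ~: [set a] != set0 by apply/set0Pn; exists b; rewrite !inE.
have [S SSs _] := Ssconn [set a] (~: [set a]) a0 b0 (setICr _) (setUCr _).
by apply/set0Pn; exists S.
Qed.

End MinMaxSize.

Section Characterization.
Variable R : realType.
Variable n : nat.
Implicit Types (A : Op R n) (X : {set 'I_n}) (Ss Ts : {set {set 'I_n}}).

Lemma reduced_setT A x y : reduced setT A x y = A x y.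
Proof.
rewrite /reduced (big_pred1 (bits0 n)) => [|c].
  by congr (A _ _); apply/ffunP => k; rewrite mergeE inE.
apply/zero_onP/eqP => [c0|->]; first by apply/ffunP => k; rewrite ffunE c0.
by move=> k _; rewrite ffunE.
Qed.

Lemma determines_setT A : determines [set setT] A.
Proof.
move=> sigma [_ sigmaA]; apply: funext => x; apply: funext => y.
by rewrite -(reduced_setT sigma) sigmaA ?inE // reduced_setT.
Qed.

Lemma hconnected_of_compatible_not_biseparable Ss A : density A ->
  (forall sigma, compatible A Ss sigma -> ~ biseparable sigma) -> hconnected Ss.
Proof.
move=> dA Hbis X Y X0 Y0 XY0 XYT.
have [|Ssplit] := boolP [exists S in Ss, (S :&: X != set0) && (S :&: Y != set0)].
  by case/exists_inP => S; exists S.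
exfalso.
have YE : Y = ~: X.
  apply/setP => k; rewrite inE; apply/idP/idP => [kY|/negPf kX].
    apply/negP => kX; have : k \in X :&: Y by rewrite inE kX kY.
    by rewrite XY0 inE.
  by move/setP: XYT => /(_ k); rewrite !inE kX.
have PX : proper_nonempty X by rewrite /proper_nonempty X0 -setC_neq0 -YE.
apply: (Hbis (marginal_product X A)); last exact: marginal_product_biseparable.
apply: marginal_product_compatible => // S SSs.
move: Ssplit; rewrite negb_exists_in => /forall_inP /(_ S SSs).
rewrite negb_and !negbK !setI_eq0 !disjoints_subset YE setCK.
by case/orP; [right | left].
Qed.

Variable rho : Op R n.
Hypothesis rho_density : density rho.
Hypothesis rho_symmetric : symmetric_state rho.

Lemma compatible_swap_symmetric Ss sigma : hconnected Ss -> compatible rho Ss sigma ->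
  swap_symmetric sigma.
Proof.
move=> Ssconn [[sigma_h [sigma_psd _]] sigma_rho].
apply: (swap_symmetric_of_invariant sigma_h); apply: (hconnected_swap_invariant Ssconn).
move=> S SSs i j iS jS.
exact: same_marginal_swap_invariant sigma_h sigma_psd
  (symmetric_state_swap_invariant rho_symmetric i j) iS jS (sigma_rho S SSs).
Qed.

Lemma compatible_max_size_le Ss Ts sigma S : hconnected Ss -> compatible rho Ss sigma ->
  S \in Ss -> (max_size Ts <= #|S|)%N -> compatible rho Ts sigma.
Proof.
move=> Ssconn rho_sigma SSs leS; split => [|T TTs]; first by case: rho_sigma.
have [rho_h _] := rho_density.
apply: same_marginal_card_le (compatible_swap_symmetric Ssconn rho_sigma) _
  (rho_sigma.2 S SSs) (leq_trans (card_le_max_size TTs) leS).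
exact: swap_symmetric_of_invariant rho_h (symmetric_state_swap_invariant rho_symmetric).
Qed.

Definition forces (P : Op R n -> Prop) Ss := forall sigma, compatible rho Ss sigma -> P sigma.

Hypothesis n_ge2 : (2 <= n)%N.
Variable P : Op R n -> Prop.
Hypothesis P_not_biseparable : forall sigma, P sigma -> ~ biseparable sigma.
Hypothesis forces_setT : forces P [set setT].

Lemma forcesP Ss : forces P Ss <->
  hconnected Ss /\ exists2 S, S \in Ss & (min_max_size (forces P) <= #|S|)%N.
Proof.
split=> [PSs|[Ssconn [S SSs leS]] sigma rho_sigma].
  have Ssconn : hconnected Ss.
    apply: hconnected_of_compatible_not_biseparable rho_density _ => sigma /PSs.
    exact: P_not_biseparable.
  split => //; have [S SSs SE] := max_size_attained (hconnected_neq0 n_ge2 Ssconn).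
  by exists S; rewrite // -SE min_max_size_le.
have [Ts PTs minTs] := min_max_size_attained forces_setT.
by apply: PTs; apply: compatible_max_size_le Ssconn rho_sigma SSs _; rewrite -minTs.
Qed.

End Characterization.

Unset Implicit Arguments. Set Strict Implicit.
Theorem proposition3 (R : realType) (n : nat) (rho : Op R n) :
  (2 <= n)%N -> density rho -> entangled rho -> symmetric_state rho ->
  forall Ss : {set {set 'I_n}},
    (determines Ss rho <->
       hconnected Ss /\ exists2 S, S \in Ss & (Lmin rho <= #|S|)%N) /\
    (detects_GME Ss rho <->
       hconnected Ss /\ exists2 S, S \in Ss & (lmin rho <= #|S|)%N).
Proof.
move=> n_ge2 rho_density rho_entangled rho_symmetric Ss.
have rho_GME : genuinely_entangled rho.
  exact: swap_invariant_genuinely_entangled rho_entangled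
    (symmetric_state_swap_invariant rho_symmetric).
split.
- apply: (forcesP rho_density rho_symmetric n_ge2 (P := fun sigma => sigma = rho)).
    by move=> sigma ->.
  exact: determines_setT.
- apply: (forcesP rho_density rho_symmetric n_ge2 (P := @genuinely_entangled R n)) => //.
  by move=> sigma /determines_setT ->.
Qed.
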